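(* Let $\chi,m\geq 2$ be integers and write $R=\vec{R}(\chi)$. Then there exists an integer $M_0=M_0(\chi,m)$ such that the following holds for every $M\geq M_0$. Let the edges of $K=K^{(3)}_{RM}$ be coloured red/blue, and suppose $V(K)$ is partitioned into $R$ sets $V_1,\dots,V_R$ each inducing a red copy of $K^{(3)}_M$. Then at least one of the following holds: (a) for any collection of subsets $W_i\subseteq V_i$ with $|W_i|\geq M/2$ for all $i\in[R]$, there is a red tight path of length two in $K[\bigcup_{i\in[R]}W_i]$ connecting $W_j$ and $W_{j'}$ for some distinct $j,j'\in[R]$; (b) $K$ contains a blue copy of $H(TT_\chi,m)$.
   Context: $TT_\chi$ denotes the transitive tournament on $[\chi]$; $\vec{R}(\ell)$ is the least $N$ such that every tournament on at least $N$ vertices contains a copy of $TT_\ell$. For a tournament $T_\chi$ on $[\chi]$, $H(T_\chi,m)$ is the 3-uniform hypergraph on disjoint sets $A_1,\dots,A_\chi$ of size $m$ with edges $\{xyz: x,y\in A_i,\ z\in A_j,\ (i,j)\text{ an arc of }T_\chi\}$. A 3-uniform tight path of length two is a sequence of distinct vertices $v_1v_2v_3v_4$ with edges $v_1v_2v_3$ and $v_2v_3v_4$; its ends are $\{v_1,v_2\}$ and $\{v_3,v_4\}$, and it connects $S,S'$ if one end lies in $S$ and the other in $S'$. *)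

From mathcomp Require Import all_boot all_order.
Set Implicit Arguments. Unset Strict Implicit. Unset Printing Implicit Defensive.

Definition is_tournament (V : finType) (T : rel V) : Prop :=
  (forall x, ~~ T x x) /\ (forall x y, x != y -> T x y (+) T y x).

Definition contains_TT (V : finType) (T : rel V) (l : nat) : Prop :=
  exists f : 'I_l -> V, injective f /\ forall i j : 'I_l, i < j -> T (f i) (f j).

Definition tt_ramsey_prop (l N : nat) : Prop :=
  forall n, N <= n -> forall T : rel 'I_n, is_tournament T -> contains_TT T l.

Definition is_vecR (l R : nat) : Prop :=
  tt_ramsey_prop l R /\ forall N, N < R -> ~ tt_ramsey_prop l N.

(* 2-colourings of the triples of V: col e = true means red. *)
Definition red_triple (V : finType) (col : {set V} -> bool) (x y z : V) : bool :=
  [&& x != y, y != z, x != z & col [set x; y; z]].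

Definition blue_triple (V : finType) (col : {set V} -> bool) (x y z : V) : bool :=
  [&& x != y, y != z, x != z & ~~ col [set x; y; z]].

Definition red_tight_path2_connecting (V : finType) (col : {set V} -> bool)
    (S S' : {set V}) : Prop :=
  exists v1 v2 v3 v4 : V,
    uniq [:: v1; v2; v3; v4] /\
    red_triple col v1 v2 v3 /\ red_triple col v2 v3 v4 /\
    ((v1 \in S /\ v2 \in S /\ v3 \in S' /\ v4 \in S') \/
     (v1 \in S' /\ v2 \in S' /\ v3 \in S /\ v4 \in S)).

(* K contains a blue copy of H(TT_chi, m): an injective map of the vertex set
   A_1 u ... u A_chi (A_i = {i} x [m]) into V such that every edge
   {x,y,z} with x,y in A_i, z in A_j, (i,j) an arc of TT_chi (i<j), is blue. *)
Definition blue_H_TT (V : finType) (col : {set V} -> bool) (chi m : nat) : Prop :=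
  exists phi : 'I_chi * 'I_m -> V, injective phi /\
    forall (i j : 'I_chi) (a b c : 'I_m), i < j -> a != b ->
      blue_triple col (phi (i, a)) (phi (i, b)) (phi (j, c)).

From Stdlib Require Import Classical.
From mathcomp Require Import all_boot all_order zify.
Set Implicit Arguments. Unset Strict Implicit. Unset Printing Implicit Defensive.

(* If (a) fails for some family W, no red tight path x u v w runs from W_p to
   W_q (p <> q).  Hence for u in W_p and v in W_q, either every triple {u,x,v}
   with x in W_p is blue, or every triple {v,w,u} with w in W_q is blue.
   Iterating the bipartite Ramsey bound over all ordered pairs (p,q) gives
   sets A_p of size m inside W_p on which this alternative does not depend on
   u and v; it orients a tournament on [R].  A transitive subtournament
   f : TT_chi -> [R] then makes every triple {u,x,v} with u,x in A_(f i) and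
   v in A_(f j), i < j, blue, which is a blue H(TT_chi, m). *)

Section Counting.

Variable V : finType.

Lemma ord_injection_into (S : {set V}) k :
  k <= #|S| -> exists h : 'I_k -> V, injective h /\ forall a, h a \in S.
Proof.
move=> leS; exists (fun a => enum_val (widen_ord leS a)); split=> [a b|a].
  by move/enum_val_inj/(congr1 val)=> /= /val_inj.
exact: enum_valP.
Qed.

Lemma pigeonhole_fiber (T : finType) (f : V -> T) (Y : {set V}) t :
  t * #|T| < #|Y| -> exists y, t < #|[set v in Y | f v == y]|.
Proof.
move=> ltY; apply/existsP; apply: contraLR ltY; rewrite negb_exists -leqNgt.
move/forallP=> small; rewrite -sum1_card (partition_big f xpredT) //=.
rewrite mulnC -sum_nat_const; apply: leq_sum => y _.
rewrite sum1dep_card; move: (small y); rewrite -leqNgt; apply: leq_trans.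
by apply/subset_leq_card/subsetP=> v; rewrite !inE.
Qed.

End Counting.

Definition homogeneous (V : finType) (c : rel V) (X Y : {set V}) : Prop :=
  exists b, {in X & Y, forall u v, c u v = b}.

Lemma card_set_ord k : #|{: {set 'I_k}}| = 2 ^ k.
Proof.
have := card_powerset [set: 'I_k]; rewrite cardsT card_ord => <-.
by apply: eq_card => P; rewrite powersetE subsetT.
Qed.

Lemma bipartite_homogeneous (V : finType) (c : rel V) (X Y : {set V}) t :
  2 * t <= #|X| -> t * 2 ^ (2 * t) < #|Y| ->
  exists X' Y' : {set V}, [/\ X' \subset X, Y' \subset Y, t <= #|X'|, t <= #|Y'|
                  & homogeneous c X' Y'].
Proof.
move=> leX ltY; have [h [inj_h hX]] := ord_injection_into leX.
pose nbhd v := [set i | c (h i) v].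
have [P ltP] : exists P : {set 'I_(2 * t)}, t < #|[set v in Y | nbhd v == P]|.
  by apply: pigeonhole_fiber; rewrite card_set_ord.
have [Q [b [leQ QP]]] : exists (Q : {set 'I_(2 * t)}) b,
    t <= #|Q| /\ {in Q, forall i, (i \in P) = b}.
  case: (leqP t #|P|) => [le_tP | lt_Pt]; first by exists P, true; split=> // i ->.
  exists (~: P), false; split=> [|i]; last by rewrite inE => /negbTE.
  by have := cardsC P; rewrite card_ord; lia.
exists (h @: Q), [set v in Y | nbhd v == P]; split.
- by apply/subsetP=> _ /imsetP[i _ ->]; exact: hX.
- by apply/subsetP=> v; rewrite inE => /andP[].
- by rewrite card_imset.
- exact: ltnW ltP.
exists b => _ v /imsetP[i Qi ->]; rewrite inE -(QP i Qi) => /andP[_ /eqP <-].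
by rewrite inE.
Qed.

Lemma homogeneousS (V : finType) (c : rel V) (X Y X' Y' : {set V}) :
  X' \subset X -> Y' \subset Y -> homogeneous c X Y -> homogeneous c X' Y'.
Proof.
move=> /subsetP sX /subsetP sY [b hom]; exists b => u v uX vY.
by apply: hom; [apply: sX | apply: sY].
Qed.

Definition refine_bound t := t * 2 ^ (2 * t) + 2 * t + 1.

Section Refinement.

Variables (I V : finType) (c : I -> I -> rel V).

Lemma refine_pair t (W : I -> {set V}) p q :
  (forall i, refine_bound t <= #|W i|) -> p != q ->
  exists A : I -> {set V}, (forall i, A i \subset W i /\ t <= #|A i|) /\
    homogeneous (c p q) (A p) (A q).
Proof.
move=> leW neq_pq.
have [X [Y [sX sY leX leY hom]]] : exists X Y : {set V},
    [/\ X \subset W p, Y \subset W q, t <= #|X|, t <= #|Y|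
       & homogeneous (c p q) X Y].
  apply: bipartite_homogeneous.
    by move: (leW p); rewrite /refine_bound; lia.
  by move: (leW q); rewrite /refine_bound; lia.
exists (fun i => if i == p then X else if i == q then Y else W i); split.
  move=> i; case: eqVneq => [-> //|_]; case: eqVneq => [-> //|_].
  by split=> //; move: (leW i); rewrite /refine_bound; lia.
by rewrite /= !eqxx eq_sym (negbTE neq_pq).
Qed.

Lemma homogeneous_refinement_seq (s : seq (I * I)) m (W : I -> {set V}) :
  (forall i, iter (size s) refine_bound m <= #|W i|) ->
  exists A : I -> {set V}, (forall i, A i \subset W i /\ m <= #|A i|) /\
    {in s, forall pq, pq.1 != pq.2 ->
      homogeneous (c pq.1 pq.2) (A pq.1) (A pq.2)}.
Proof.
elim: s W => [|[p q] s IHs] W leW; first by exists W.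
set t := iter (size s) refine_bound m.
have [W' [sW' homW']] : exists W' : I -> {set V},
    (forall i, W' i \subset W i /\ t <= #|W' i|) /\
    (p != q -> homogeneous (c p q) (W' p) (W' q)).
  have [_|neq_pq] := eqVneq p q; last first.
    by have [W' [? ?]] := refine_pair leW neq_pq; exists W'.
  exists W; split=> // i; split=> //; apply: leq_trans (leW i).
  by rewrite /= /refine_bound -/t; lia.
have [A [sA homA]] := IHs W' (fun i => (sW' i).2).
exists A; split=> [i|pq].
  by have [sAW' leA] := sA i; split=> //; apply: subset_trans sAW' (sW' i).1.
rewrite inE => /orP[/eqP -> /= neq_pq|]; last exact: homA.
by apply: homogeneousS (homW' neq_pq); [apply: (sA p).1 | apply: (sA q).1].
Qed.

Lemma homogeneous_refinement m (W : I -> {set V}) :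
  (forall i, iter #|{: I * I}| refine_bound m <= #|W i|) ->
  exists A : I -> {set V}, (forall i, A i \subset W i /\ m <= #|A i|) /\
    forall p q, p != q -> homogeneous (c p q) (A p) (A q).
Proof.
rewrite cardE => /homogeneous_refinement_seq [A [sA homA]].
by exists A; split=> // p q; apply: (homA (p, q)); rewrite mem_enum.
Qed.

End Refinement.

Lemma set3C12 (V : finType) (a b c : V) : [set a; b; c] = [set b; a; c].
Proof. by apply/setP=> z; rewrite !inE; case: (z == a); case: (z == b). Qed.

Lemma set3_rot (V : finType) (a b c : V) : [set a; b; c] = [set b; c; a].
Proof.
by apply/setP=> z; rewrite !inE; case: (z == a); case: (z == b); case: (z == c).
Qed.

Definition fan_blue (V : finType) (col : {set V} -> bool) (S : {set V}) u v :=
  [forall x in S, (x != u) ==> ~~ col [set u; x; v]].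

Lemma fan_blue_total (V : finType) (col : {set V} -> bool) (S T : {set V}) u v :
  [disjoint S & T] -> u \in S -> v \in T ->
  ~ red_tight_path2_connecting col S T ->
  fan_blue col S u v || fan_blue col T v u.
Proof.
move=> dST uS vT no_path; apply/negPn/negP; rewrite negb_or.
case/andP=> /forallPn[x] /[!negb_imply] /and3P[xS xu /andP[red_uxv _]].
move=> /forallPn[w] /[!negb_imply] /and3P[wT wv /andP[red_vwu _]].
have neqST a b : a \in S -> b \in T -> a != b.
  by move=> aS bT; apply: contraTneq bT => <-; rewrite (disjointFr dST aS).
apply: no_path; exists x, u, v, w; split.
  by rewrite /= !inE !negb_or xu (eq_sym v) wv !neqST.
rewrite /red_triple xu (eq_sym v) wv !neqST //= set3C12 red_uxv set3_rot red_vwu.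
by split=> //; split=> //; left.
Qed.

Definition orient n (r : rel 'I_n) : rel 'I_n :=
  fun p q => [&& p != q, r p q & ~~ r q p || (p < q)].

Lemma orient_tournament n (r : rel 'I_n) :
  (forall p q, p != q -> r p q || r q p) -> is_tournament (orient r).
Proof.
move=> total; split=> [p|p q neq_pq]; first by rewrite /orient eqxx.
rewrite /orient neq_pq eq_sym neq_pq /=.
have := total p q neq_pq; case: (r p q); case: (r q p) => //= _.
by case: ltngtP => // /val_inj eq_pq; rewrite eq_pq eqxx in neq_pq.
Qed.

Lemma blue_H_TT_of_blue_chain (V : finType) (col : {set V} -> bool) chi m
    (A : 'I_chi -> {set V}) :
  (forall i j, i != j -> [disjoint A i & A j]) -> (forall i, m <= #|A i|) ->
  (forall i j : 'I_chi, i < j -> {in A i &, forall u x, u != x ->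
     {in A j, forall v, ~~ col [set u; x; v]}}) ->
  blue_H_TT col chi m.
Proof.
move=> dA leA blueA.
have /fin_all_exists[h hP] i :
    exists h : 'I_m -> V, injective h /\ forall a, h a \in A i.
  exact/ord_injection_into/leA.
have inj_h : injective (fun ia : 'I_chi * 'I_m => h ia.1 ia.2).
  move=> [i a] [j b] /= eq_h; have [eq_ij|neq_ij] := eqVneq i j.
    by subst j; rewrite ((hP i).1 _ _ eq_h).
  by have := disjointFr (dA i j neq_ij) ((hP i).2 a); rewrite eq_h (hP j).2.
exists (fun ia => h ia.1 ia.2); split=> // i j a b c lt_ij neq_ab.
have neq_ij : i != j by rewrite neq_ltn lt_ij.
have neq_hj x : h i x != h j c.
  by apply: contraNneq neq_ij => /(inj_h (i, x) (j, c)) [-> _].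
rewrite /blue_triple (inj_eq (hP i).1) neq_ab !neq_hj /=.
apply: (blueA i j lt_ij _ _ ((hP i).2 a) ((hP i).2 b) _ _ ((hP j).2 c)).
by rewrite (inj_eq (hP i).1).
Qed.

Lemma blue_H_TT_of_no_red_path (V : finType) (col : {set V} -> bool) chi m R
    (W : 'I_R -> {set V}) :
  tt_ramsey_prop chi R ->
  (forall p q, p != q -> [disjoint W p & W q]) ->
  (forall p, iter #|{: 'I_R * 'I_R}| refine_bound m <= #|W p|) ->
  (forall p q, p != q -> ~ red_tight_path2_connecting col (W p) (W q)) ->
  blue_H_TT col chi m.
Proof.
move=> ramsey dW leW no_path.
have [A [sA homA]] := homogeneous_refinement (fun p _ => fan_blue col (W p)) leW.
have AW p : {subset A p <= W p} by apply/subsetP; exact: (sA p).1.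
pose dominates p q := [forall u in A p, forall v in A q, fan_blue col (W p) u v].
have total p q : p != q -> dominates p q || dominates q p.
  move=> neq_pq; have [[] hom] := homA p q neq_pq; apply/orP; [left|right];
    apply/forallP=> u; apply/implyP=> uA; apply/forallP=> v; apply/implyP=> vA.
    exact: hom.
  have := fan_blue_total (dW p q neq_pq) (AW p v vA) (AW q u uA)
    (no_path p q neq_pq).
  by rewrite hom.
have [f [inj_f chain]] := ramsey R (leqnn R) _ (orient_tournament total).
apply: (@blue_H_TT_of_blue_chain _ _ _ _ (fun i => A (f i))).
- move=> i j neq_ij; apply: disjointW (sA _).1 (sA _).1 (dW _ _ _).
  by rewrite (inj_eq inj_f).
- by move=> i; exact: (sA _).2.
move=> i j lt_ij u x uA xA neq_ux v vA.
have /and3P[_ dom _] := chain i j lt_ij.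
have /forall_inP/(_ u uA)/forall_inP/(_ v vA)/forall_inP/(_ x (AW _ x xA)) := dom.
by rewrite eq_sym neq_ux.
Qed.

Theorem lemma5p1 (chi m R : nat) :
  2 <= chi -> 2 <= m -> is_vecR chi R ->
  exists M0 : nat, forall M : nat, M0 <= M ->
  forall (col : {set 'I_(R * M)} -> bool) (part : 'I_(R * M) -> 'I_R),
    (forall i : 'I_R, #|[set v | part v == i]| = M) ->
    (forall x y z : 'I_(R * M), part x = part y -> part y = part z ->
        [&& x != y, y != z & x != z] -> red_triple col x y z) ->
    (forall W : 'I_R -> {set 'I_(R * M)},
        (forall i, W i \subset [set v | part v == i] /\ M <= 2 * #|W i|) ->
        exists j j' : 'I_R, j != j' /\ red_tight_path2_connecting col (W j) (W j'))
    \/ blue_H_TT col chi m.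
Proof.
move=> _ _ [ramsey _].
exists (2 * iter #|{: 'I_R * 'I_R}| refine_bound m) => M leM col part _ _.
have [blue|no_blue] := classic (blue_H_TT col chi m); [by right | left=> W WP].
apply: NNPP => no_pair; apply/no_blue/(blue_H_TT_of_no_red_path ramsey (W := W)).
- move=> p q neq_pq; apply: disjointW (WP p).1 (WP q).1 _.
  apply/pred0P=> v; rewrite /= !inE.
  by case: eqP => // ->; rewrite (negbTE neq_pq).
- by move=> p; have := (WP p).2; lia.
- by move=> p q neq_pq red_path; apply: no_pair; exists p, q.
Qed.
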